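(* Let $0<\alpha\le\delta<\infty$ and $0<\gamma<\tfrac13$, and define $\mathcal R^a_1(a)_k=\frac{1}{k+1}\sum_{n=0}^k a_na_{k-n}$ for $k\in\mathbb N_0$. Then $\mathcal R^a_1$, acting on $X_{\alpha,\delta}$, is a strict contraction with respect to $d(a,b)=\sum_{k\ge0}(\gamma/\delta)^k|a_k-b_k|$: there is $C<1$ such that $d(\mathcal R^a_1(a),\mathcal R^a_1(b))\le C\,d(a,b)$ for all $a,b\in X_{\alpha,\delta}$.
   Context: $X_{\alpha,\delta}$ is the set of real sequences $a=(a_k)_{k\ge0}$ with $a_0=1$, $a_1=\alpha$, $0\le a_k\le\delta^k$ for $k\ge2$. *)

From Stdlib Require Import Reals.
From Coquelicot Require Import Coquelicot.
Open Scope R_scope.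

Definition X_set (alpha delta : R) (a : nat -> R) : Prop :=
  a 0%nat = 1 /\ a 1%nat = alpha /\
  (forall k : nat, (2 <= k)%nat -> 0 <= a k /\ a k <= delta ^ k).

Definition Ra1 (a : nat -> R) (k : nat) : R :=
  / INR (k + 1) * sum_f_R0 (fun n => a n * a (k - n)%nat) k.

Definition dist_term (gamma delta : R) (a b : nat -> R) (k : nat) : R :=
  (gamma / delta) ^ k * Rabs (a k - b k).

Definition dist_w (gamma delta : R) (a b : nat -> R) : R :=
  Series (dist_term gamma delta a b).

(* For k <= 1, R(a)_k = R(b)_k since a and b agree at indices 0 and 1.
   For k >= 2 the factor 1/(k+1) is at most 1/3, and writing
   a_n a_(k-n) - b_n b_(k-n) = a_n (a_(k-n) - b_(k-n)) + (a_n - b_n) b_(k-n)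
   with |a_n|, |b_n| <= delta^n bounds the weighted difference by two Cauchy
   products of (gamma^n) with the terms of d(a,b).  These sum to 2 d(a,b) / (1 - gamma),
   so C = 2 / (3 (1 - gamma)) works, and C < 1 exactly when gamma < 1/3. *)

From Stdlib Require Import Reals.
From Coquelicot Require Import Coquelicot.
From Stdlib Require Import Lra Lia.
Open Scope R_scope.

Definition cauchy_product (u v : nat -> R) (k : nat) : R :=
  sum_f_R0 (fun n => u n * v (k - n)%nat) k.

Lemma cauchy_product_nonneg (u v : nat -> R) (k : nat) :
  (forall n, 0 <= u n) -> (forall n, 0 <= v n) -> 0 <= cauchy_product u v k.
Proof.
  intros Hu Hv; apply cond_pos_sum; intro n; apply Rmult_le_pos; auto.
Qed.

Lemma ex_series_nonneg_le (u v : nat -> R) :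
  (forall n, 0 <= u n <= v n) -> ex_series v -> ex_series u.
Proof.
  intros Huv.
  apply (@ex_series_le R_AbsRing R_CompleteNormedModule).
  intro n; change norm with Rabs.
  destruct (Huv n); rewrite Rabs_right; lra.
Qed.

Lemma Rabs_sub_mul_le (x x' y y' : R) :
  Rabs (x * y - x' * y') <= Rabs x * Rabs (y - y') + Rabs (x - x') * Rabs y'.
Proof.
  rewrite <- !Rabs_mult.
  replace (x * y - x' * y') with (x * (y - y') + (x - x') * y') by ring.
  apply Rabs_triang.
Qed.

Lemma pow_mul_div_pow_split (gamma delta : R) (n k : nat) :
  0 < delta -> (n <= k)%nat ->
  delta ^ n * (gamma / delta) ^ k = gamma ^ n * (gamma / delta) ^ (k - n).
Proof.
  intros Hd Hnk.
  replace k with (n + (k - n))%nat at 1 by lia.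
  rewrite pow_add, <- Rmult_assoc, <- Rpow_mult_distr.
  replace (delta * (gamma / delta)) with gamma by (field; lra).
  reflexivity.
Qed.

Lemma dist_term_nonneg (gamma delta : R) (a b : nat -> R) (n : nat) :
  0 <= gamma -> 0 < delta -> 0 <= dist_term gamma delta a b n.
Proof.
  intros Hg Hd.
  apply Rmult_le_pos; [apply pow_le, Rdiv_le_0_compat | apply Rabs_pos]; lra.
Qed.

Section CauchyProductDifference.

Variables gamma delta : R.
Hypothesis gamma_nonneg : 0 <= gamma.
Hypothesis delta_pos : 0 < delta.
Variables a b : nat -> R.
Hypothesis a_bound : forall n, Rabs (a n) <= delta ^ n.
Hypothesis b_bound : forall n, Rabs (b n) <= delta ^ n.

Let r := gamma / delta.
Let T := dist_term gamma delta a b.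

Let r_pow_nonneg (k : nat) : 0 <= r ^ k.
Proof. apply pow_le; unfold r; apply Rdiv_le_0_compat; lra. Qed.

Lemma weighted_product_sub_le (n k : nat) : (n <= k)%nat ->
  r ^ k * Rabs (a n * a (k - n)%nat - b n * b (k - n)%nat)
    <= gamma ^ n * T (k - n)%nat + T n * gamma ^ (k - n).
Proof.
  intros Hnk.
  apply Rle_trans with
    (r ^ k * (delta ^ n * Rabs (a (k - n)%nat - b (k - n)%nat)
              + Rabs (a n - b n) * delta ^ (k - n))).
  - apply Rmult_le_compat_l; [apply r_pow_nonneg|].
    eapply Rle_trans; [apply Rabs_sub_mul_le|].
    apply Rplus_le_compat.
    + apply Rmult_le_compat_r; [apply Rabs_pos | apply a_bound].
    + apply Rmult_le_compat_l; [apply Rabs_pos | apply b_bound].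
  - assert (Hsplit : delta ^ (k - n) * r ^ k = gamma ^ (k - n) * r ^ n).
    { unfold r; rewrite pow_mul_div_pow_split by (lra || lia).
      replace (k - (k - n))%nat with n by lia; reflexivity. }
    unfold T, dist_term; fold r.
    rewrite Rmult_plus_distr_l.
    replace (r ^ k * (delta ^ n * Rabs (a (k - n)%nat - b (k - n)%nat)))
      with ((delta ^ n * r ^ k) * Rabs (a (k - n)%nat - b (k - n)%nat)) by ring.
    replace (r ^ k * (Rabs (a n - b n) * delta ^ (k - n)))
      with ((delta ^ (k - n) * r ^ k) * Rabs (a n - b n)) by ring.
    rewrite Hsplit; unfold r; rewrite pow_mul_div_pow_split by (lra || lia).
    right; ring.
Qed.

Lemma weighted_cauchy_product_sub_le (k : nat) :
  r ^ k * Rabs (cauchy_product a a k - cauchy_product b b k)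
    <= cauchy_product (pow gamma) T k + cauchy_product T (pow gamma) k.
Proof.
  unfold cauchy_product; rewrite <- minus_sum, <- plus_sum.
  eapply Rle_trans.
  { apply Rmult_le_compat_l; [apply r_pow_nonneg|].
    apply sum_f_R0_triangle. }
  rewrite scal_sum; apply sum_Rle; intros n Hn.
  rewrite Rmult_comm; apply weighted_product_sub_le; assumption.
Qed.

End CauchyProductDifference.

Section XSetBounds.

Variables alpha delta gamma : R.
Hypothesis alpha_pos : 0 < alpha.
Hypothesis alpha_le_delta : alpha <= delta.
Hypothesis gamma_pos : 0 < gamma.

Lemma X_set_abs_le (a : nat -> R) (n : nat) :
  X_set alpha delta a -> Rabs (a n) <= delta ^ n.
Proof.
  intros [Ha0 [Ha1 Ha]].
  destruct n as [|[|n]].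
  - rewrite Ha0, Rabs_R1; simpl; lra.
  - rewrite Ha1, Rabs_right; simpl; lra.
  - destruct (Ha (S (S n))) as [Hlo Hhi]; [lia|].
    rewrite Rabs_right; lra.
Qed.

Lemma X_set_abs_sub_le (a b : nat -> R) (n : nat) :
  X_set alpha delta a -> X_set alpha delta b -> Rabs (a n - b n) <= delta ^ n.
Proof.
  intros [Ha0 [Ha1 Ha]] [Hb0 [Hb1 Hb]].
  assert (0 <= delta ^ n) by (apply pow_le; lra).
  destruct n as [|[|n]].
  - rewrite Ha0, Hb0, Rminus_diag, Rabs_R0; lra.
  - rewrite Ha1, Hb1, Rminus_diag, Rabs_R0; lra.
  - destruct (Ha (S (S n))) as [? ?]; [lia|].
    destruct (Hb (S (S n))) as [? ?]; [lia|].
    unfold Rabs; destruct Rcase_abs; lra.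
Qed.

Lemma dist_term_le_pow (a b : nat -> R) (n : nat) :
  X_set alpha delta a -> X_set alpha delta b ->
  dist_term gamma delta a b n <= gamma ^ n.
Proof.
  intros Ha Hb; unfold dist_term.
  apply Rle_trans with ((gamma / delta) ^ n * delta ^ n).
  - apply Rmult_le_compat_l; [apply pow_le, Rlt_le, Rdiv_lt_0_compat; lra|].
    apply X_set_abs_sub_le; assumption.
  - rewrite <- Rpow_mult_distr; right; f_equal; field; lra.
Qed.

Lemma Ra1_eq_le1 (a b : nat -> R) (k : nat) :
  X_set alpha delta a -> X_set alpha delta b -> (k <= 1)%nat ->
  Ra1 a k = Ra1 b k.
Proof.
  intros [Ha0 [Ha1 _]] [Hb0 [Hb1 _]] Hk.
  destruct k as [|[|k]]; [| | lia]; unfold Ra1; simpl;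
    rewrite ?Ha0, ?Ha1, ?Hb0, ?Hb1; reflexivity.
Qed.

Lemma dist_term_Ra1_le (a b : nat -> R) (k : nat) :
  X_set alpha delta a -> X_set alpha delta b ->
  dist_term gamma delta (Ra1 a) (Ra1 b) k
    <= / 3 * (cauchy_product (pow gamma) (dist_term gamma delta a b) k
              + cauchy_product (dist_term gamma delta a b) (pow gamma) k).
Proof.
  intros Ha Hb.
  set (P := cauchy_product (pow gamma) _ k + cauchy_product _ (pow gamma) k).
  assert (HP : 0 <= P).
  { apply Rplus_le_le_0_compat; apply cauchy_product_nonneg; intro n;
      apply pow_le || apply dist_term_nonneg; lra. }
  destruct (Nat.le_gt_cases k 1) as [Hk | Hk].
  - unfold dist_term; rewrite (Ra1_eq_le1 a b k), Rminus_diag, Rabs_R0 by assumption.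
    lra.
  - assert (Hr : 0 <= gamma / delta) by (apply Rlt_le, Rdiv_lt_0_compat; lra).
    assert (Hbound := weighted_cauchy_product_sub_le gamma delta ltac:(lra) ltac:(lra)
              a b (fun n => X_set_abs_le a n Ha) (fun n => X_set_abs_le b n Hb) k).
    assert (Hinv : 0 < / INR (k + 1) <= / 3).
    { assert (3 <= INR (k + 1)) by (replace 3 with (INR 3) by (simpl; lra);
                                    apply le_INR; lia).
      split; [apply Rinv_0_lt_compat | apply Rinv_le_contravar]; lra. }
    unfold dist_term, Ra1.
    rewrite <- Rmult_minus_distr_l, Rabs_mult, Rabs_right by lra.
    fold (cauchy_product a a k) (cauchy_product b b k).
    set (W := _ * Rabs (cauchy_product a a k - cauchy_product b b k)) in Hbound.
    assert (0 <= W) by (apply Rmult_le_pos; [apply pow_le, Hr | apply Rabs_pos]).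
    apply Rle_trans with (/ 3 * W); [|apply Rmult_le_compat_l; [lra | exact Hbound]].
    unfold W; rewrite <- !Rmult_assoc, (Rmult_comm _ (/ INR _)), !Rmult_assoc.
    apply Rmult_le_compat_r; [assumption | apply Hinv].
Qed.

End XSetBounds.

Theorem proposition12 (alpha delta gamma : R) :
  0 < alpha -> alpha <= delta ->
  0 < gamma -> gamma < 1 / 3 ->
  exists C : R, C < 1 /\
    forall a b : nat -> R, X_set alpha delta a -> X_set alpha delta b ->
      ex_series (dist_term gamma delta (Ra1 a) (Ra1 b)) /\
      dist_w gamma delta (Ra1 a) (Ra1 b) <= C * dist_w gamma delta a b.
Proof.
  intros Halpha Had Hgamma Hgamma3.
  exists (2 / (3 * (1 - gamma))); split.
  { apply (Rmult_lt_reg_r (3 * (1 - gamma))); [lra|].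
    unfold Rdiv; rewrite Rmult_assoc, Rinv_l; lra. }
  intros a b Ha Hb.
  set (T := dist_term gamma delta a b).
  assert (HT : forall n, 0 <= T n) by (intro; apply dist_term_nonneg; lra).
  assert (HG : is_series (pow gamma) (/ (1 - gamma)))
    by (apply is_series_geom; rewrite Rabs_right; lra).
  assert (HTex : ex_series T).
  { apply ex_series_nonneg_le with (pow gamma); [|eexists; exact HG].
    intro n; split; [apply HT | apply (dist_term_le_pow alpha); assumption]. }
  destruct HTex as [D HD].
  assert (HGpos : forall n, 0 <= gamma ^ n) by (intro; apply pow_le; lra).
  assert (Hmaj : is_series
            (fun k => / 3 * (cauchy_product (pow gamma) T k + cauchy_product T (pow gamma) k))
            (2 / (3 * (1 - gamma)) * D)).
  { replace (2 / (3 * (1 - gamma)) * D)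
      with (/ 3 * (/ (1 - gamma) * D + D * / (1 - gamma))) by (field; lra).
    apply (is_series_scal_l (/ 3)
             (fun k => cauchy_product (pow gamma) T k + cauchy_product T (pow gamma) k)).
    apply (is_series_plus (cauchy_product (pow gamma) T) (cauchy_product T (pow gamma)));
      apply is_series_mult_pos; assumption. }
  assert (Hcmp : forall k, 0 <= dist_term gamma delta (Ra1 a) (Ra1 b) k
                   <= / 3 * (cauchy_product (pow gamma) T k + cauchy_product T (pow gamma) k))
    by (intro; split; [apply dist_term_nonneg | apply (dist_term_Ra1_le alpha)]; lra || assumption).
  split.
  - apply ex_series_nonneg_le with (1 := Hcmp); eexists; exact Hmaj.
  - unfold dist_w; fold T; rewrite (is_series_unique T D HD), <- (is_series_unique _ _ Hmaj).
    apply Series_le; [exact Hcmp | eexists; exact Hmaj].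
Qed.
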